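(* Let $G$ be a finite loopless graph (parallel edges allowed). There exist a maximal spanning forest $F$ of $G$ and an orientation $\mathcal{O}_1$ of $G$ such that, with the basis $B_{\mathcal{C}}$ built from $(F,\mathcal{O}_1)$, $\langle x_i,e_j\rangle\in\{0,1\}$ for all $x_i\in B_{\mathcal{C}}$ and $e_j\in E(G)$; and an orientation $\mathcal{O}_2$ such that, with the basis $B_{\mathcal{F}}$ built from $(F,\mathcal{O}_2)$, $\langle x_i,e_j\rangle\in\{0,1\}$ for all $x_i\in B_{\mathcal{F}}$ and $e_j\in E(G)$.
   Context: For an orientation $\mathcal{O}$, $C_1(G;\mathbb{Z})$ is the free abelian group on $E=\{e_1,\dots,e_n\}$, each $e_j$ taken with its $\mathcal{O}$-direction, $E$ orthonormal. Given a maximal spanning forest $F$: for $e_i\in E(F)$, $F\setminus e_i$ has components $K_1,K_2$ with $e_i$ directed from $K_1$ to $K_2$, and $x_i=\sum_j\epsilon_je_j$ over the edges $e_j$ between $K_1$ and $K_2$, $\epsilon_j=+1$ if $e_j$ is directed out of $K_1$ in $\mathcal{O}$, else $-1$; $B_{\mathcal{C}}=\{x_i:e_i\in E(F)\}$. For $e_i\notin E(F)$, $x_i=\sum_j\epsilon_je_j$ over the unique cycle in $F\cup e_i$, oriented cyclically so that $e_i$ keeps its $\mathcal{O}$-direction, $\epsilon_j=\pm1$ according as the cyclic and $\mathcal{O}$ directions agree or differ; $B_{\mathcal{F}}=\{x_i:e_i\notin E(F)\}$. *)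

From mathcomp Require Import all_boot all_order all_algebra.
Set Implicit Arguments. Unset Strict Implicit. Unset Printing Implicit Defensive.
Import GRing.Theory Num.Theory.

(* A finite multigraph: finite vertex type V, finite edge type E, and each
   edge e has (unordered) endpoints u e and v e. *)
Section Graph.
Variables (V E : finType) (u v : E -> V).

Definition tailO (O : E -> bool) (e : E) : V := if O e then u e else v e.
Definition headO (O : E -> bool) (e : E) : V := if O e then v e else u e.

Definition joins (e : E) (x y : V) : bool :=
  ((u e == x) && (v e == y)) || ((u e == y) && (v e == x)).

Definition adj (S : {set E}) : rel V := fun x y => [exists e in S, joins e x y].
Definition conn (S : {set E}) (x y : V) : bool := connect (adj S) x y.

Definition forest (S : {set E}) : Prop :=
  forall e, e \in S -> ~~ conn (S :\ e) (u e) (v e).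

Definition max_spanning_forest (F : {set E}) : Prop :=
  forest F /\ forall e, e \notin F -> ~ forest (e |: F).

(* Fundamental cut vector x_i for e_i in F, w.r.t. orientation O:
   K1 = component of F\e_i containing the tail of e_i, K2 = the one
   containing its head; coefficient <x_i, e_j>. *)
Definition cut_coef (F : {set E}) (O : E -> bool) (i j : E) : int :=
  let S := F :\ i in
  let K1 := conn S (tailO O i) in
  let K2 := conn S (headO O i) in
  if K1 (tailO O j) && K2 (headO O j) then 1%R
  else if K2 (tailO O j) && K1 (headO O j) then (-1)%R
  else 0%R.

(* p = [:: p_0; ...; p_(n-1)] with vertex sequence vs = [:: x_0; ...; x_n]
   is a path in F from a to b: edges in F, vertices distinct, p_k joins
   x_k and x_(k+1). *)
Definition steps (p : seq E) (vs : seq V) : seq (E * (V * V)) :=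
  zip p (zip vs (behead vs)).

Definition forest_path (F : {set E}) (a b : V) (p : seq E) (vs : seq V) : bool :=
  [&& all (fun e => e \in F) p, uniq vs, size vs == (size p).+1,
      head a vs == a, last a vs == b &
      all (fun t => joins t.1 t.2.1 t.2.2) (steps p vs)].

(* Coefficient of e_j in the cycle formed by e_i (kept with its O-direction,
   from tailO to headO) followed by the path p from headO O i back to
   tailO O i: +1 if e_j is traversed in its O-direction, -1 otherwise. *)
Definition cyc_coef (O : E -> bool) (i : E) (p : seq E) (vs : seq V) (j : E)
  : int :=
  ((j == i)%:R +
   \sum_(t <- steps p vs | t.1 == j)
      (if (tailO O j == t.2.1) && (headO O j == t.2.2) then 1 else -1))%R.

End Graph.

From mathcomp Require Import all_boot all_order all_algebra.
From mathcomp Require Import zify.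
Set Implicit Arguments. Unset Strict Implicit. Unset Printing Implicit Defensive.
Import GRing.Theory Num.Theory.

(* Take a normal rooted spanning forest, i.e. one in which every edge joins a
   vertex to one of its ancestors.  It exists: if an edge is not of this kind,
   re-hanging the subtree of its shallower endpoint below the other endpoint
   strictly increases the total depth, which is bounded by |V|^2.
   Orient every edge from ancestor to descendant.  Removing the tree edge above
   c splits off the subtree of c, and since every edge points downwards no edge
   leaves that subtree, so no cut coefficient is -1.  Reversing the tree edges
   only, the fundamental cycle of a non-tree edge runs down from an ancestor a
   to a descendant d and comes back up along the parent steps from d to a,
   each edge traversed in its own direction, so every cycle coefficient is 0
   or 1. *)

Section Graph.
Variables (V E : finType) (u v : E -> V).

Lemma joins_sym e a b : joins u v e a b = joins u v e b a.
Proof. by rewrite /joins orbC. Qed.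

Lemma joins_uv e : joins u v e (u e) (v e).
Proof. by rewrite /joins !eqxx. Qed.

Lemma joins_tailO_headO O e : joins u v e (tailO u v O e) (headO u v O e).
Proof. by rewrite /tailO /headO /joins; case: (O e); rewrite !eqxx ?orbT. Qed.

Lemma joins_ends e a b a' b' : joins u v e a b -> joins u v e a' b' ->
  (a = a' /\ b = b') \/ (a = b' /\ b = a').
Proof.
by rewrite /joins => /orP[|] /andP[/eqP<- /eqP<-] /orP[|] /andP[/eqP<- /eqP<-];
  auto.
Qed.

Lemma adj_sym S : symmetric (adj u v S).
Proof.
by move=> x y; apply/existsP/existsP => -[e /andP[eS J]];
  exists e; rewrite eS joins_sym.
Qed.

Lemma conn_sym S x y : conn u v S x y = conn u v S y x.
Proof. exact: (sym_connect_sym (adj_sym S)). Qed.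

Definition flipO (S : {set E}) (O : E -> bool) (e : E) : bool := (e \in S) (+) O e.

Lemma flipO_in (S : {set E}) (O : E -> bool) e : e \in S ->
  (tailO u v (flipO S O) e, headO u v (flipO S O) e) =
  (headO u v O e, tailO u v O e).
Proof. by rewrite /tailO /headO /flipO => ->; case: (O e). Qed.

Lemma flipO_notin (S : {set E}) (O : E -> bool) e : e \notin S ->
  (tailO u v (flipO S O) e, headO u v (flipO S O) e) =
  (tailO u v O e, headO u v O e).
Proof. by rewrite /tailO /headO /flipO => /negbTE->. Qed.

Lemma unzip1_steps (p : seq E) (vs : seq V) :
  size vs = (size p).+1 -> unzip1 (steps p vs) = p.
Proof.
by case: vs => // x vs [Hs]; apply: unzip1_zip; rewrite size_zip /= Hs; lia.
Qed.

Lemma steps_mem (p : seq E) (vs : seq V) t : t \in steps p vs -> t.2.1 \in vs.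
Proof.
elim: p vs => [|f p IH] [|x [|y vs]] //; rewrite /steps /= !inE.
case/orP => [/eqP-> | /IH]; first by rewrite eqxx.
by rewrite inE => ->; rewrite orbT.
Qed.

End Graph.

Section RootedForest.
Variables (V E : finType) (u v : E -> V).

Record rooted_forest := RootedForest {
  parent_edge : V -> option E;
  parent : V -> V;
  depth : V -> nat;
  parent_edge_joins :
    forall z e, parent_edge z = Some e -> joins u v e z (parent z);
  depth_parent :
    forall z e, parent_edge z = Some e -> depth z = (depth (parent z)).+1;
  depth_root : forall z, parent_edge z = None -> depth z = 0 }.

Variable T : rooted_forest.

Definition parent_step : rel V :=
  fun z w => (parent_edge T z != None) && (parent T z == w).

Definition ancestor (a d : V) : bool := connect parent_step d a.

Lemma ancestor_trans a b c : ancestor a b -> ancestor b c -> ancestor a c.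
Proof. by move=> Hab Hbc; apply: connect_trans Hbc Hab. Qed.

Lemma ancestor_parent z e : parent_edge T z = Some e -> ancestor (parent T z) z.
Proof. by move=> Ez; apply: connect1; rewrite /parent_step Ez eqxx. Qed.

Lemma ancestor_parent_neq a z : ancestor a z -> z != a -> ancestor a (parent T z).
Proof.
case/connectP=> [[|w p]] /=; first by move=> _ ->; rewrite eqxx.
by case/andP=> /andP[_ /eqP <-] Hp Hl _; apply/connectP; exists p.
Qed.

Lemma ancestor_root a z : parent_edge T z = None -> ancestor a z -> z = a.
Proof. by move=> Ez /connectP[[|w p]] //=; rewrite /parent_step Ez. Qed.

Lemma depth_ancestor a d : ancestor a d -> depth T a <= depth T d.
Proof.
case/connectP=> p; elim: p d => [|w p IH] d /=; first by move=> _ ->.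
rewrite /parent_step; case Ed: (parent_edge T d) => [e|] //= /andP[/eqP Hw Hp] Hl.
by have := IH _ Hp Hl; have := depth_parent Ed; rewrite Hw; lia.
Qed.

Lemma depth_ancestor_lt a d : ancestor a d -> d != a -> depth T a < depth T d.
Proof.
move=> Had nda; have := depth_ancestor (ancestor_parent_neq Had nda).
case: (parent_edge T d) (@depth_parent T d) (@ancestor_root a d)
  => [e|] Dd Rd; first by rewrite (Dd e).
by rewrite (Rd erefl Had) eqxx in nda.
Qed.

Lemma ancestor_parentN z e : parent_edge T z = Some e -> ~~ ancestor z (parent T z).
Proof.
by move=> Ez; apply/negP => /depth_ancestor; rewrite (depth_parent Ez) ltnn.
Qed.

Lemma parent_edge_inj z z' e :
  parent_edge T z = Some e -> parent_edge T z' = Some e -> z = z'.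
Proof.
move=> Ez Ez'.
case: (joins_ends (parent_edge_joins Ez) (parent_edge_joins Ez'))
  => [[]|[E1 E2]] //.
by have := depth_parent Ez; have := depth_parent Ez'; rewrite -E1 E2; lia.
Qed.

Lemma depth_iter_parent k z :
  k <= depth T z -> depth T (iter k (parent T) z) = depth T z - k.
Proof.
elim: k => [|k IH] Hk; first by rewrite subn0.
rewrite iterS; have := IH (ltnW Hk); set w := iter k _ z.
case Ew: (parent_edge T w) => [e|]; first by rewrite (depth_parent Ew); lia.
by rewrite (depth_root Ew); lia.
Qed.

Lemma depth_lt_card z : depth T z < #|V|.
Proof.
pose f (k : 'I_(depth T z).+1) := iter k (parent T) z.
have f_inj : injective f.
  move=> k1 k2 /(congr1 (depth T)); rewrite /f.
  rewrite depth_iter_parent -1?ltnS // depth_iter_parent -1?ltnS // => Ek.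
  by apply: val_inj; move: (ltn_ord k1) (ltn_ord k2) Ek => /=; lia.
by have := leq_card f f_inj; rewrite card_ord.
Qed.

Definition tree_edges : {set E} := [set e | [exists z, parent_edge T z == Some e]].

Lemma tree_edgesP e :
  reflect (exists z, parent_edge T z = Some e) (e \in tree_edges).
Proof.
rewrite inE; apply: (iffP existsP) => -[z Ez]; exists z; first exact/eqP.
by rewrite Ez.
Qed.

Lemma ancestor_conn a d : ancestor a d -> conn u v tree_edges d a.
Proof.
apply: connect_sub => z w; rewrite /parent_step.
case Ez: (parent_edge T z) => [e|] //= /eqP <-; apply: connect1.
apply/existsP; exists e; rewrite (parent_edge_joins Ez) andbT.
by apply/tree_edgesP; exists z.
Qed.

Lemma subtree_closed c e : parent_edge T c = Some e ->
  forall x y, conn u v (tree_edges :\ e) x y -> ancestor c x -> ancestor c y.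
Proof.
move=> Ec x y /connectP[p]; elim: p x => [|w p IH] x /=; first by move=> _ ->.
case/andP=> /existsP[f /andP[fS J]] Hp Hl Hx; apply: (IH w Hp Hl).
move: fS; rewrite in_setD1 => /andP[fe /tree_edgesP[z Ez]].
case: (joins_ends J (parent_edge_joins Ez)) => [[-> ->]|[-> ->]] in Hx *.
- apply: ancestor_parent_neq Hx _; apply: contraNneq fe => zc.
  by move: Ez; rewrite zc Ec => -[->].
- exact: ancestor_trans Hx (ancestor_parent Ez).
Qed.

Lemma tree_edges_forest : forest u v tree_edges.
Proof.
move=> e /tree_edgesP[c Ec]; apply/negP => Hcon.
have := ancestor_parentN Ec; apply/negP/negPn.
case: (joins_ends (joins_uv u v e) (parent_edge_joins Ec)) => -[E1 E2];
  [rewrite E1 E2 in Hcon | rewrite E1 E2 conn_sym in Hcon];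
  exact: (subtree_closed Ec Hcon (connect0 _ _)).
Qed.

Definition comparable e := ancestor (u e) (v e) || ancestor (v e) (u e).

Hypothesis loopless : forall e, u e != v e.
Hypothesis T_normal : forall e, comparable e.

Lemma tree_edges_max : max_spanning_forest u v tree_edges.
Proof.
split=> [|e eF Hf]; first exact: tree_edges_forest.
have := Hf e (setU11 e _); rewrite setU1K // => /negP; apply.
by case/orP: (T_normal e) => /ancestor_conn //; rewrite conn_sym.
Qed.

Definition depthO (e : E) : bool := depth T (u e) < depth T (v e).

Lemma ancestor_tailO_headO j : ancestor (tailO u v depthO j) (headO u v depthO j).
Proof.
rewrite /tailO /headO /depthO; case: ltnP => Hd.
  by case/orP: (T_normal j) => // /depth_ancestor; lia.
case/orP: (T_normal j) => // /depth_ancestor_lt.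
by rewrite eq_sym loopless => /(_ isT); lia.
Qed.

Lemma tree_edge_ends c i : parent_edge T c = Some i ->
  (tailO u v depthO i, headO u v depthO i) = (parent T c, c).
Proof.
move=> Ec.
case: (joins_ends (joins_tailO_headO u v depthO i) (parent_edge_joins Ec))
  => -[Et Eh]; rewrite Et Eh //.
by have := ancestor_tailO_headO i; rewrite Et Eh (negbTE (ancestor_parentN Ec)).
Qed.

Lemma cut_coef_tree i j : i \in tree_edges ->
  (cut_coef u v tree_edges depthO i j == 0%R) ||
  (cut_coef u v tree_edges depthO i j == 1%R).
Proof.
case/tree_edgesP => c Ec; rewrite /cut_coef; case: (tree_edge_ends Ec) => -> ->.
set S := tree_edges :\ i.
have no_back : ~~ (conn u v S c (tailO u v depthO j) &&
                   conn u v S (parent T c) (headO u v depthO j)).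
  apply/negP => /andP[Hc Hp]; rewrite conn_sym in Hp.
  have Ht := subtree_closed Ec Hc (connect0 _ _).
  have := subtree_closed Ec Hp (ancestor_trans Ht (ancestor_tailO_headO j)).
  exact/negP/(ancestor_parentN Ec).
by rewrite (negbTE no_back); case: ifP.
Qed.

Lemma path_stays_in_subtree z e : parent_edge T z = Some e ->
  forall p w ws, all (fun f => f \in tree_edges) p -> size ws = size p ->
  all (fun t => joins u v t.1 t.2.1 t.2.2) (steps p (w :: ws)) ->
  parent T z \notin w :: ws -> ancestor z w -> ancestor z (last w ws).
Proof.
move=> Ez; elim=> [|g p IH] w [|w' ws] //= /andP[gF pF] [Hs].
rewrite /steps /= => /andP[J Js]; rewrite inE negb_or => /andP[_ Hnin] Hw.
apply: (IH w' ws pF Hs Js Hnin).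
case/tree_edgesP: gF => z' Ez'.
case: (joins_ends J (parent_edge_joins Ez')) => -[Ew Ew']; subst w w'.
- by apply: ancestor_parent_neq Hw _; apply: contraNneq Hnin => ->; apply: mem_head.
- exact: ancestor_trans Hw (ancestor_parent Ez').
Qed.

Lemma forest_path_climbs p x vs : all (fun f => f \in tree_edges) p ->
  uniq (x :: vs) -> size vs = size p ->
  all (fun t => joins u v t.1 t.2.1 t.2.2) (steps p (x :: vs)) ->
  ancestor (last x vs) x ->
  all (fun t => (parent_edge T t.2.1 == Some t.1) && (t.2.2 == parent T t.2.1))
    (steps p (x :: vs)).
Proof.
elim: p x vs => [|f p IH] x [|y vs] //= /andP[fF pF] /andP[xnin Hu] [Hs].
rewrite /steps /= => /andP[J Js] Hx.
case/tree_edgesP: (fF) => z Ez.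
case: (joins_ends J (parent_edge_joins Ez)) => -[Ex Ey]; subst x y.
- rewrite Ez !eqxx; apply: IH pF Hu Hs Js _.
  apply: ancestor_parent_neq Hx _; apply/eqP => zl.
  by move: xnin; rewrite {1}zl mem_last.
- have Hl := path_stays_in_subtree Ez pF Hs Js xnin (connect0 _ _).
  by have := ancestor_parentN Ez; rewrite (ancestor_trans Hl Hx).
Qed.

Lemma uniq_climbing_edges p vs : uniq vs -> size vs = (size p).+1 ->
  all (fun t => parent_edge T t.2.1 == Some t.1) (steps p vs) -> uniq p.
Proof.
elim: p vs => [|f p IH] [|x [|y vs]] //; rewrite cons_uniq => /andP[xnin Hu] [Hs].
rewrite /steps /= => /andP[/eqP Ex Hall].
rewrite (IH _ Hu (congr1 succn Hs) Hall) andbT.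
rewrite -(@unzip1_steps _ _ p (y :: vs)) /= ?Hs //; apply/mapP => -[t tin ft].
have /eqP Et := allP Hall t tin; rewrite -ft in Et.
by move: xnin; rewrite -(parent_edge_inj Et Ex) (steps_mem tin).
Qed.

Lemma cyc_coef_climbing i p vs j : size vs = (size p).+1 ->
  all (fun t => (parent_edge T t.2.1 == Some t.1) && (t.2.2 == parent T t.2.1))
    (steps p vs) ->
  cyc_coef u v (flipO tree_edges depthO) i p vs j = ((j == i) + count_mem j p)%:R%R.
Proof.
move=> Hs climbs; rewrite /cyc_coef natrD big_seq_cond (eq_bigr (fun _ => 1%R)).
  rewrite -big_seq_cond -(unzip1_steps Hs) count_map.
  by rewrite -sum1_count natr_sum (unzip1_steps Hs).
move=> t /andP[tin /eqP <-]; case/andP: (allP climbs t tin) => /eqP Et /eqP ->.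
have tF : t.1 \in tree_edges by apply/tree_edgesP; exists t.2.1.
case: (flipO_in u v depthO tF) => -> ->; case: (tree_edge_ends Et) => -> ->.
by rewrite !eqxx.
Qed.

Lemma cyc_coef_tree i p vs j : i \notin tree_edges ->
  forest_path u v tree_edges (headO u v (flipO tree_edges depthO) i)
    (tailO u v (flipO tree_edges depthO) i) p vs ->
  (cyc_coef u v (flipO tree_edges depthO) i p vs j == 0%R) ||
  (cyc_coef u v (flipO tree_edges depthO) i p vs j == 1%R).
Proof.
move=> iF; case: (flipO_notin u v depthO iF) => -> ->.
case/and5P => pF Hu /eqP Hs Hhd /andP[Hl Hst].
case: vs Hu Hs Hhd Hl Hst => [|x vs] // Hu Hs /eqP /= Hx /eqP /= Hl Hst; subst x.
have climbs := forest_path_climbs pF Hu (eq_add_S _ _ Hs) Hst.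
rewrite Hl in climbs; have {}climbs := climbs (ancestor_tailO_headO i).
have p_uniq : uniq (i :: p).
  rewrite /= (uniq_climbing_edges Hu Hs) ?andbT; first exact: contra (allP pF i) iF.
  by apply: sub_all climbs => t /andP[].
rewrite cyc_coef_climbing //.
have -> : ((j == i) + count_mem j p)%N = (j \in i :: p).
  by rewrite -(count_uniq_mem j p_uniq) /= eq_sym.
by case: (_ \in _).
Qed.

End RootedForest.

Section Existence.
Variables (V E : finType) (u v : E -> V).

Definition potential (T : rooted_forest u v) : nat := \sum_z depth T z.

Lemma potential_bound T : potential T <= #|V| * #|V|.
Proof.
rewrite -sum_nat_const; apply: leq_sum => z _; exact: ltnW (depth_lt_card T z).
Qed.

Definition trivial_forest : rooted_forest u v.
Proof. by apply: (@RootedForest _ _ u v (fun _ => None) id (fun _ => 0)). Defined.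

Lemma rehang T e x y : joins u v e y x -> depth T y <= depth T x ->
  ~~ ancestor T y x -> exists T' : rooted_forest u v, potential T < potential T'.
Proof.
move=> J Hyx Nyx; have Ayy : ancestor T y y := connect0 _ _.
(* Hang y below x through e; the subtree of y moves down by the same amount. *)
pose pe z := if z == y then Some e else parent_edge T z.
pose pa z := if z == y then x else parent T z.
pose d z := if ancestor T y z then depth T z + ((depth T x).+1 - depth T y)
            else depth T z.
have pe_joins z f : pe z = Some f -> joins u v f z (pa z).
  rewrite /pe /pa; case: eqP => [-> [<-] //|_ Ez].
  by apply: parent_edge_joins Ez.
have d_parent z f : pe z = Some f -> d z = (d (pa z)).+1.
  rewrite /pe /pa /d; case: eqP => [-> _|/eqP zy Ez].
    by rewrite Ayy (negbTE Nyx); lia.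
  rewrite (depth_parent Ez); case Ay: (ancestor T y z).
    by rewrite (ancestor_parent_neq Ay zy); lia.
  suff -> : ancestor T y (parent T z) = false by [].
  by apply: contraFF Ay => Ap; apply: ancestor_trans Ap (ancestor_parent Ez).
have d_root z : pe z = None -> d z = 0.
  rewrite /pe /d; case: eqP => // /eqP zy Ez; rewrite (depth_root Ez).
  by case: ifP => // /(ancestor_root Ez) zy'; rewrite zy' eqxx in zy.
exists (RootedForest pe_joins d_parent d_root); rewrite /potential /=.
rewrite (bigD1 y) //= [X in _ < X](bigD1 y) //= {1}/d Ayy.
have : \sum_(z | z != y) depth T z <= \sum_(z | z != y) d z.
  by apply: leq_sum => z _; rewrite /d; case: ifP => _; rewrite ?leq_addr.
lia.
Qed.

Lemma exists_normal_forest : exists T : rooted_forest u v, forall e, comparable T e.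
Proof.
suff: forall n (T : rooted_forest u v), #|V| * #|V| - potential T < n ->
    exists T' : rooted_forest u v, forall e, comparable T' e.
  by move/(_ (#|V| * #|V|).+1 trivial_forest); apply; rewrite ltnS leq_subr.
elim=> // n IH T HT.
case: (pickP (fun e => ~~ comparable T e)) => [e | allc]; last first.
  by exists T => e; apply/negbFE/allc.
rewrite /comparable negb_or => /andP[Nuv Nvu].
have [T' HT'] : exists T' : rooted_forest u v, potential T < potential T'.
  case: (leqP (depth T (u e)) (depth T (v e))) => Hd.
    exact: rehang (joins_uv u v e) Hd Nuv.
  by apply: (rehang (e := e) _ (ltnW Hd) Nvu); rewrite joins_sym joins_uv.
by apply: (IH T'); have := potential_bound T'; lia.
Qed.

End Existence.

Theorem lemma3p2 (V E : finType) (u v : E -> V)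
  (loopless : forall e, u e != v e) :
  exists F : {set E}, max_spanning_forest u v F /\
    (exists O1 : E -> bool, forall i j, i \in F ->
        (cut_coef u v F O1 i j == 0%R) || (cut_coef u v F O1 i j == 1%R)) /\
    (exists O2 : E -> bool, forall i, i \notin F ->
        forall (p : seq E) (vs : seq V),
        forest_path u v F (headO u v O2 i) (tailO u v O2 i) p vs ->
        forall j, (cyc_coef u v O2 i p vs j == 0%R) ||
                  (cyc_coef u v O2 i p vs j == 1%R)).
Proof.
have [T T_normal] := exists_normal_forest u v.
exists (tree_edges T); split; first exact: tree_edges_max.
split; first by exists (depthO T) => i j; apply: cut_coef_tree.
by exists (flipO (tree_edges T) (depthO T)) => i iF p vs Hp j; apply: cyc_coef_tree.
Qed.
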